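(* Let $K\ge 1$ and $q\ge 2$ be integers, and let $i\neq j$ be two elements of the alphabet $\{0,1,\dots,q-1\}$. For $p\in\{1,\dots,K\}$ let $$\mathcal{S}^{(p)}_{i,j}=\bigl\{(\bm m+p\,\bm e_i,\ \bm m+p\,\bm e_j)\ :\ \bm m\in\mathbb{N}_0^{q},\ \textstyle\sum_{\ell=0}^{q-1}m_\ell=K-p\bigr\},$$ and let $\mathcal{S}_{i,j}=\bigcup_{p=1}^{K}\mathcal{S}^{(p)}_{i,j}$. Then $$|\mathcal{S}_{i,j}|=\binom{K+q-1}{q}.$$
   Context: $K$ nodes each hold a quantized value in the alphabet $\{0,1,\dots,q-1\}$. For a symmetric function of the nodes' values only the histogram of the input vector matters: the histogram is $\bm h=(h_0,\dots,h_{q-1})\in\mathbb{N}_0^q$ with $h_\ell$ the number of nodes holding value $\ell$, so $\sum_\ell h_\ell=K$. Here $\mathbb{N}_0=\{0,1,2,\dots\}$ and $\bm e_\ell$ denotes the $\ell$-th standard basis vector of $\mathbb{N}_0^q$ (indices $0,\dots,q-1$). The set $\mathcal{S}^{(p)}_{i,j}$ consists of the pairs of histograms of two input configurations that differ in exactly $p$ nodes, each of which holds value $i$ in the first configuration and value $j$ in the second, while the remaining $K-p$ nodes hold identical values in both configurations (the common part being described by the histogram $\bm m$). *)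

From mathcomp Require Import all_boot.
Set Implicit Arguments. Unset Strict Implicit. Unset Printing Implicit Defensive.

(* A histogram over the alphabet {0,..,q-1} of K nodes: every entry is at most
   K, so histograms relevant here are represented as finite functions
   'I_q -> 'I_K.+1 (values read as nats). *)
Definition hist (q K : nat) := {ffun 'I_q -> 'I_K.+1}.

Definition inSp (q K : nat) (i j : 'I_q) (p : nat) (xy : hist q K * hist q K) : bool :=
  [exists m : hist q K,
     [&& (\sum_(l < q) (m l : nat)) == K - p,
         [forall l : 'I_q, (xy.1 l : nat) == m l + p * (l == i)] &
         [forall l : 'I_q, (xy.2 l : nat) == m l + p * (l == j)]]].

Definition Sp (q K : nat) (i j : 'I_q) (p : nat) : {set hist q K * hist q K} :=
  [set xy | @inSp q K i j p xy].

Definition S (q K : nat) (i j : 'I_q) : {set hist q K * hist q K} :=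
  \bigcup_(1 <= p < K.+1) @Sp q K i j p.

Arguments S {q} K i j.

(** The pairs in [S_{i,j}] are exactly the pairs [(m + p e_i, m + p e_j)] with
    [p = K - |m|] and [|m| <= K - 1], and since [i != j] such a pair determines
    [p] (as the increase of the [j]-th entry) and then [m].  So [S_{i,j}] is in
    bijection with the weak compositions of at most [K - 1] into [q] parts,
    which are counted by [binomial.card_partial_ord_partitions]. *)
From mathcomp Require Import all_boot.
From mathcomp Require Import zify.

Section CommonPart.

Variables (q n : nat).

Implicit Types (t : q.-tuple 'I_n.+1) (x : hist q n.+1) (k l : 'I_q) (p : nat).

Definition tsum t := \sum_(v <- t) (v : nat).

(* [inord] wraps out-of-range values; [add_massE] rules this out when the
   total mass fits in [n.+1]. *)
Definition add_mass t p k : hist q n.+1 :=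
  [ffun l => inord (tnth t l + p * (l == k))].

Lemma tsumE t : tsum t = \sum_(l < q) (tnth t l : nat).
Proof. by rewrite /tsum big_tuple. Qed.

Lemma tnth_le_tsum t l : tnth t l <= tsum t.
Proof. by rewrite tsumE (bigD1 l) //= leq_addr. Qed.

Lemma add_massE t p k l :
  tsum t + p <= n.+1 -> add_mass t p k l = tnth t l + p * (l == k) :> nat.
Proof.
move=> le_sum; rewrite ffunE inordK //.
by have := tnth_le_tsum t l; case: (l == k); lia.
Qed.

Lemma add_massP t p k x : tsum t + p <= n.+1 ->
  reflect (forall l, x l = tnth t l + p * (l == k) :> nat) (x == add_mass t p k).
Proof.
move=> le_sum; apply: (iffP eqP) => [-> l | xE]; first exact: add_massE.
by apply/ffunP => l; apply: val_inj; rewrite /= xE add_massE.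
Qed.

Lemma add_mass_inj t t' p k : tsum t + p <= n.+1 -> tsum t' + p <= n.+1 ->
  add_mass t p k = add_mass t' p k -> t = t'.
Proof.
move=> le_t le_t' e; apply: eq_from_tnth => l; apply: val_inj.
by apply/(@addIn (p * (l == k))); rewrite -!add_massE // e.
Qed.

Definition hist_of_tuple t : hist q n.+1 :=
  [ffun l => widen_ord (leqnSn n.+1) (tnth t l)].

Lemma sum_hist_of_tuple t : \sum_(l < q) (hist_of_tuple t l : nat) = tsum t.
Proof. by rewrite tsumE; apply: eq_bigr => l _; rewrite ffunE. Qed.

Lemma tuple_of_small_hist (m : hist q n.+1) : \sum_(l < q) (m l : nat) <= n ->
  exists2 t, tsum t = \sum_(l < q) (m l : nat) & forall l, m l = tnth t l :> nat.
Proof.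
move=> le_sum.
have lt_ml l : m l < n.+1.
  have : m l <= \sum_(k < q) (m k : nat) by rewrite (bigD1 l) //= leq_addr.
  lia.
exists [tuple Ordinal (lt_ml l) | l < q] => [|l]; last by rewrite tnth_mktuple.
by rewrite tsumE; apply: eq_bigr => l _; rewrite tnth_mktuple.
Qed.

Variables (i j : 'I_q).

Lemma mem_Sp p xy : 0 < p <= n.+1 ->
  (xy \in @Sp q n.+1 i j p) =
  [exists t, (tsum t == n.+1 - p) && (xy == (add_mass t p i, add_mass t p j))].
Proof.
move=> /andP [p_gt0 p_le]; rewrite inE; apply/existsP/existsP.
- case=> m /and3P [/eqP sum_m /forallP xE /forallP yE].
  have [|t sum_t mE] := tuple_of_small_hist m; first by rewrite sum_m; lia.
  have le_sum : tsum t + p <= n.+1 by lia.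
  exists t; rewrite sum_t sum_m eqxx /=; case: xy xE yE => x y /= xE yE.
  rewrite xpair_eqE; apply/andP; split; apply/add_massP => // l.
    by rewrite (eqP (xE l)) mE.
  by rewrite (eqP (yE l)) mE.
- case=> t /andP [/eqP sum_t /eqP ->].
  have le_sum : tsum t + p <= n.+1 by lia.
  exists (hist_of_tuple t); rewrite sum_hist_of_tuple sum_t eqxx /=.
  by apply/andP; split; apply/forallP => l; rewrite add_massE // ffunE.
Qed.

Definition gap t := n.+1 - tsum t.

Definition pair_of_common t := (add_mass t (gap t) i, add_mass t (gap t) j).

Lemma S_image :
  S n.+1 i j = pair_of_common @: [set t | tsum t <= n].
Proof.
apply/setP => xy; rewrite /S big_add1 /= big_mkord; apply/bigcupP/imsetP.
- case=> p _; rewrite mem_Sp; last by have := ltn_ord p; lia.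
  case/existsP=> t /andP [/eqP sum_t /eqP ->].
  have gap_t : gap t = p.+1 by rewrite /gap sum_t; have := ltn_ord p; lia.
  by exists t; rewrite ?inE /pair_of_common ?gap_t //; have := ltn_ord p; lia.
- case=> t; rewrite inE => le_sum ->.
  have lt_gap : (gap t).-1 < n.+1 by rewrite /gap; lia.
  exists (Ordinal lt_gap) => //=.
  have -> : (gap t).-1.+1 = gap t by rewrite /gap; lia.
  rewrite mem_Sp; last by rewrite /gap; lia.
  by apply/existsP; exists t; rewrite /gap subKn ?eqxx // ltnW.
Qed.

Lemma pair_of_common_inj : i != j ->
  {in [set t | tsum t <= n] &, injective pair_of_common}.
Proof.
move=> neq_ij t t'; rewrite !inE => le_t le_t' [e_i e_j].
have le_gap u : tsum u <= n -> tsum u + gap u <= n.+1 by rewrite /gap; lia.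
have jE u : tsum u <= n -> add_mass u (gap u) j j - add_mass u (gap u) i j = gap u.
  move=> le_u; rewrite !add_massE ?le_gap // eqxx eq_sym (negbTE neq_ij).
  by rewrite muln1 muln0 addn0 addKn.
have gapE : gap t = gap t' by rewrite -(jE t) // -(jE t') // e_i e_j.
apply: (@add_mass_inj t t' (gap t) i); first exact: le_gap.
  by rewrite gapE le_gap.
by rewrite e_i gapE.
Qed.

End CommonPart.

Theorem lemma1 (K q : nat) (i j : 'I_q) :
  1 <= K -> 2 <= q -> i != j ->
  #|S K i j| = 'C(K + q - 1, q).
Proof.
case: K => [//|n] _ _ neq_ij.
rewrite S_image card_in_imset; last exact: pair_of_common_inj.
rewrite card_partial_ord_partitions.
by congr binomial; lia.
Qed.
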